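(* Let $\Psi:[t_0,\infty)\to\mathbb{R}_+$ be a non-decreasing positive function and let $f$ be an essentially sub-linear dimension function. If $\sum_{q} q\,f\!\left(\frac{1}{q^2\Psi(q)}\right)<\infty$, then $\sum_{q}\sum_{1\le p\le q} f\!\left(\frac{1}{pq\Psi(q)}\right)<\infty$, where $q$ ranges over integers $q\ge t_0$ and $p$ over integers.
   Context: A dimension function is an increasing continuous function $f:\mathbb{R}_+\to\mathbb{R}_+$ with $f(r)\to 0$ as $r\to 0$. It is essentially sub-linear if there exists $B>1$ such that $\limsup_{x\to 0}\frac{f(Bx)}{f(x)}<B$. *)

From Stdlib Require Import Reals.
From Coquelicot Require Import Coquelicot.
Open Scope R_scope.

Definition dimension_function (f : R -> R) : Prop :=
  (forall r, 0 < r -> 0 <= f r) /\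
  (forall r s, 0 < r -> r <= s -> f r <= f s) /\
  (forall r, 0 < r -> continuity_pt f r) /\
  (forall eps, 0 < eps -> exists delta, 0 < delta /\
     forall r, 0 < r < delta -> f r < eps).

(* Essentially sub-linear: exists B > 1 with limsup_{x->0+} f(Bx)/f(x) < B,
   written as: some c < B bounds the ratio f(Bx)/f(x) for all small x > 0
   (in multiplied-out form f(Bx) <= c f(x)). *)
Definition essentially_sublinear (f : R -> R) : Prop :=
  exists B, 1 < B /\ exists c, c < B /\ exists delta, 0 < delta /\
    forall x, 0 < x < delta -> f (B * x) <= c * f x.

(* q ranges over integers q >= t0 (and q >= 1 so that the terms make sense). *)
Definition q_in_range (t0 : R) (q : nat) : bool :=
  Nat.leb 1 q && (if Rle_dec t0 (INR q) then true else false).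

(** Write [x = 1/(q^2 Psi(q))], so that the inner sum is [sum_(1<=p<=q) f((q/p) x)].
    Apply sub-linearity [f(B y) <= c f(y)] to the terms with [p <= q/B] and
    monotonicity [f((q/p) x) <= f(B x) <= c f(x)] to the at most [q] terms with
    [q/B < p <= q].  Iterating over [q, q/B, q/B^2, ...] gives the geometric bound
    [sum_(p<=r) f((r/p) x) <= c B/(B-c) * r f(x)], so the double series is dominated
    termwise by a multiple of [sum_q q f(1/(q^2 Psi(q)))]. *)
From Stdlib Require Import Reals Lra Lia.
From Coquelicot Require Import Coquelicot.
Open Scope R_scope.

Lemma sum_n_m_le_loc (a b : nat -> R) (n m : nat) :
  (forall k, (n <= k <= m)%nat -> a k <= b k) -> sum_n_m a n m <= sum_n_m b n m.
Proof.
intros Hab; induction m as [|m IH].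
- destruct n as [|n].
  + rewrite !sum_n_n; apply Hab; lia.
  + rewrite !sum_n_m_zero by lia; apply Rle_refl.
- destruct (Nat.le_gt_cases n (S m)) as [Hn|Hn].
  + rewrite !sum_n_Sm by lia.
    apply Rplus_le_compat; [apply IH; intros; apply Hab; lia | apply Hab; lia].
  + rewrite !sum_n_m_zero by lia; apply Rle_refl.
Qed.

Lemma sum_n_m_nonneg (a : nat -> R) (n m : nat) :
  (forall k, (n <= k <= m)%nat -> 0 <= a k) -> 0 <= sum_n_m a n m.
Proof.
intros Ha; apply Rle_trans with (sum_n_m (fun _ => 0) n m).
- rewrite sum_n_m_const; lra.
- apply sum_n_m_le_loc; exact Ha.
Qed.

Lemma sum_indicator_le (a r : R) (M : nat) : 0 <= a -> 0 <= r ->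
  sum_n_m (fun p => if Rle_dec (INR p) r then a else 0) 1 M <= a * r.
Proof.
intros Ha Hr.
enough (Hboth : forall M,
          let S := sum_n_m (fun p => if Rle_dec (INR p) r then a else 0) 1 M in
          S <= a * INR M /\ S <= a * r) by apply Hboth.
clear M; induction M as [|M [IHM IHr]]; cbv zeta in *.
- rewrite sum_n_m_zero by lia; change zero with 0; simpl; split; nra.
- rewrite sum_n_Sm by lia; change plus with Rplus; cbv beta.
  destruct (Rle_dec (INR (S M)) r) as [Hle|Hgt]; rewrite S_INR in *; split; nra.
Qed.

Lemma pow_unbounded (B r : R) : 1 < B -> exists k, r < B ^ k.
Proof.
intros HB.
destruct (Pow_x_infinity B ltac:(rewrite Rabs_pos_eq; lra) (r + 1)) as [k Hk].
exists k; specialize (Hk k (le_n k)).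
rewrite Rabs_pos_eq in Hk by (apply pow_le; lra); lra.
Qed.

(* Truncating at [p <= r] lets the estimate recurse from [r] to [r/B] while the
   number of summands stays fixed. *)
Definition dilation_term (f : R -> R) (x r : R) (p : nat) : R :=
  if Rle_dec (INR p) r then f (r / INR p * x) else 0.

Section SublinearDilation.

Variables (f : R -> R) (B c delta : R).
Hypotheses (HB : 1 < B) (Hc : 0 <= c < B)
  (Hf0 : forall r, 0 < r -> 0 <= f r)
  (Hfmono : forall r s, 0 < r -> r <= s -> f r <= f s)
  (Hfsub : forall y, 0 < y < delta -> f (B * y) <= c * f y).

Lemma dilation_term_step (x r : R) (p : nat) :
  0 < x < delta -> 0 < r -> r * x < delta -> (1 <= p)%nat ->
  dilation_term f x r p <=
  c * dilation_term f x (r / B) p + (if Rle_dec (INR p) r then c * f x else 0).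
Proof.
intros Hx Hr Hrx Hp.
assert (Hp1 : 1 <= INR p) by (apply (le_INR 1); lia).
assert (Hfx : 0 <= f x) by (apply Hf0; lra).
assert (HrB : 0 < r / B < r) by
  (split; [apply Rdiv_lt_0_compat | apply Rlt_div_l]; nra).
unfold dilation_term.
destruct (Rle_dec (INR p) (r / B)) as [Hsmall|Hlarge];
  destruct (Rle_dec (INR p) r) as [Hle|Hgt]; try lra.
- assert (Hdiv : r / B / INR p <= r / B) by (apply Rle_div_l; nra).
  assert (Hy : 0 < r / B / INR p * x <= r * x).
  { split; [apply Rmult_lt_0_compat; [apply Rdiv_lt_0_compat|]|]; nra. }
  replace (r / INR p * x) with (B * (r / B / INR p * x)) by (field; lra).
  pose proof (Hfsub (r / B / INR p * x) ltac:(lra)); nra.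
- apply Rnot_le_lt, Rlt_div_l in Hlarge; [|lra].
  assert (Hratio : r / INR p < B) by (apply Rlt_div_l; lra).
  assert (0 < r / INR p) by (apply Rdiv_lt_0_compat; lra).
  assert (f (r / INR p * x) <= f (B * x)) by (apply Hfmono; nra).
  pose proof (Hfsub x Hx); nra.
Qed.

Lemma dilation_sum_le_pow (M k : nat) (x r : R) :
  0 < x < delta -> 0 < r < B ^ k -> r * x < delta ->
  sum_n_m (dilation_term f x r) 1 M <= c * B / (B - c) * r * f x.
Proof.
assert (HK : 0 <= c * B / (B - c)).
{ unfold Rdiv; apply Rmult_le_pos; [nra | apply Rlt_le, Rinv_0_lt_compat; lra]. }
revert r; induction k as [|k IH]; intros r Hx Hr Hrx.
- assert (Hzero : sum_n_m (dilation_term f x r) 1 M = 0).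
  { rewrite (sum_n_m_ext_loc _ (fun _ => 0)).
    { rewrite sum_n_m_const; apply Rmult_0_r. }
    intros p Hp; assert (1 <= INR p) by (apply (le_INR 1); lia).
    unfold dilation_term; destruct Rle_dec; [simpl in Hr; lra | reflexivity]. }
  rewrite Hzero; assert (0 <= f x) by (apply Hf0; lra).
  apply Rmult_le_pos; [apply Rmult_le_pos|]; lra.
- assert (HrB : 0 < r / B < B ^ k) by
    (split; [apply Rdiv_lt_0_compat | apply Rlt_div_l]; simpl in Hr; nra).
  assert (HrBr : r / B < r) by (apply Rlt_div_l; nra).
  assert (IHrB := IH (r / B) Hx HrB ltac:(nra)).
  assert (Hcount := sum_indicator_le (c * f x) r M
                      ltac:(assert (0 <= f x) by (apply Hf0; lra); nra) ltac:(lra)).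
  apply Rle_trans with (sum_n_m (fun p => c * dilation_term f x (r / B) p
                           + (if Rle_dec (INR p) r then c * f x else 0)) 1 M).
  { apply sum_n_m_le_loc; intros p Hp; apply dilation_term_step; lra || lia. }
  rewrite (sum_n_m_plus (G := R_AbelianMonoid) (fun p => c * dilation_term f x (r / B) p)),
    (sum_n_m_mult_l (K := R_Ring)).
  change plus with Rplus; change mult with Rmult.
  apply Rle_trans with (c * (c * B / (B - c) * (r / B) * f x) + c * f x * r).
  + apply Rplus_le_compat; [apply Rmult_le_compat_l; [lra | exact IHrB] | exact Hcount].
  + (* [c B/(B-c)] is the fixed point of [K = c K / B + c]. *)
    right; field; lra.
Qed.

Lemma dilation_sum_le (M : nat) (x r : R) :
  0 < x < delta -> 0 < r -> r * x < delta ->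
  sum_n_m (dilation_term f x r) 1 M <= c * B / (B - c) * r * f x.
Proof.
intros Hx Hr Hrx; destruct (pow_unbounded B r HB) as [k Hk].
apply (dilation_sum_le_pow M k); lra.
Qed.

Lemma inner_sum_le (q : nat) (P : R) :
  (1 <= q)%nat -> 0 < P -> 1 / (INR q * P) < delta ->
  0 <= sum_n_m (fun p => f (1 / (INR p * INR q * P))) 1 q
    <= c * B / (B - c) * (INR q * f (1 / (INR q ^ 2 * P))).
Proof.
intros Hq HP Hsmall.
assert (Hq1 : 1 <= INR q) by (apply (le_INR 1); lia).
set (x := 1 / (INR q ^ 2 * P)).
assert (Hx : 0 < x) by (apply Rdiv_lt_0_compat; [lra | apply Rmult_lt_0_compat; [apply pow_lt|]; lra]).
assert (Hqx : INR q * x = 1 / (INR q * P)) by (unfold x; field; lra).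
rewrite (sum_n_m_ext_loc _ (dilation_term f x (INR q))).
2:{ intros p Hp; assert (1 <= INR p <= INR q) by (split; [apply (le_INR 1) | apply le_INR]; lia).
    unfold dilation_term; destruct Rle_dec; [|lra].
    f_equal; unfold x; field; lra. }
split.
- apply sum_n_m_nonneg; intros p Hp; assert (1 <= INR p) by (apply (le_INR 1); lia).
  unfold dilation_term; destruct Rle_dec; [|lra].
  apply Hf0, Rmult_lt_0_compat; [apply Rdiv_lt_0_compat|]; lra.
- rewrite <- Rmult_assoc; apply dilation_sum_le; nra.
Qed.

End SublinearDilation.

Lemma essentially_sublinear_nonneg (f : R -> R) :
  (forall r, 0 < r -> 0 <= f r) -> essentially_sublinear f ->
  exists B c delta, 1 < B /\ 0 <= c < B /\ 0 < delta /\
    forall y, 0 < y < delta -> f (B * y) <= c * f y.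
Proof.
intros Hf0 (B & HB & c & Hc & delta & Hdelta & Hsub).
exists B, (Rmax c 0), delta.
split; [lra | split; [split; [apply Rmax_r | apply Rmax_lub_lt; lra] | split; [lra |]]].
intros y Hy; apply Rle_trans with (c * f y); [apply Hsub; lra |].
apply Rmult_le_compat_r; [apply Hf0; lra | apply Rmax_l].
Qed.

Lemma q_in_range_true (t0 : R) (q : nat) :
  (1 <= q)%nat -> t0 <= INR q -> q_in_range t0 q = true.
Proof.
intros Hq Ht; unfold q_in_range.
rewrite (proj2 (Nat.leb_le 1 q) Hq); destruct Rle_dec; [reflexivity | contradiction].
Qed.

Lemma eventually_in_range_small (t0 delta : R) (Psi : R -> R) :
  (forall t, t0 <= t -> 0 < Psi t) -> (forall s t, t0 <= s -> s <= t -> Psi s <= Psi t) ->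
  0 < delta ->
  exists N, forall q, (N <= q)%nat ->
    (1 <= q)%nat /\ t0 <= INR q /\ 1 / (INR q * Psi (INR q)) < delta.
Proof.
intros HPsi_pos HPsi_mono Hdelta.
destruct (INR_unbounded t0) as [n Hn].
assert (Hn1 : t0 <= INR (S n)) by (rewrite S_INR; pose proof (pos_INR n); lra).
assert (HPn := HPsi_pos _ Hn1).
destruct (INR_unbounded (1 / (delta * Psi (INR (S n))))) as [m Hm].
apply Rlt_div_l in Hm; [|nra].
exists (S n + m)%nat; intros q Hq.
assert (Hnq : INR (S n) <= INR q) by (apply le_INR; lia).
assert (Hmq : INR m <= INR q) by (apply le_INR; lia).
assert (HPq := HPsi_mono _ _ Hn1 Hnq).
split; [lia | split; [lra |]].
assert (0 < INR q) by (apply lt_0_INR; lia).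
apply Rlt_div_l; [apply Rmult_lt_0_compat; lra |].
assert (INR m * (delta * Psi (INR (S n))) <= INR q * (delta * Psi (INR (S n))))
  by (apply Rmult_le_compat_r; nra).
assert (INR q * (delta * Psi (INR (S n))) <= INR q * (delta * Psi (INR q)))
  by (apply Rmult_le_compat_l; nra).
nra.
Qed.

Theorem mainTheorem5 (t0 : R) (Psi f : R -> R)
  (HPsi_pos : forall t, t0 <= t -> 0 < Psi t)
  (HPsi_mono : forall s t, t0 <= s -> s <= t -> Psi s <= Psi t)
  (Hf : dimension_function f)
  (Hsub : essentially_sublinear f)
  (Hconv : ex_series (fun q : nat =>
     if q_in_range t0 q then
       INR q * f (1 / (INR q ^ 2 * Psi (INR q)))
     else 0)) :
  ex_series (fun q : nat =>
     if q_in_range t0 q then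
       sum_n_m (fun p : nat => f (1 / (INR p * INR q * Psi (INR q)))) 1 q
     else 0).
Proof.
destruct Hf as [Hf0 [Hfmono _]].
destruct (essentially_sublinear_nonneg f Hf0 Hsub)
  as (B & c & delta & HB & Hc & Hdelta & Hfsub).
destruct (eventually_in_range_small t0 delta Psi HPsi_pos HPsi_mono Hdelta) as [N HN].
apply (ex_series_incr_n _ N).
apply (ex_series_le (V := R_CompleteNormedModule)) with
  (b := fun k => c * B / (B - c) *
          (if q_in_range t0 (N + k) then
             INR (N + k) * f (1 / (INR (N + k) ^ 2 * Psi (INR (N + k))))
           else 0)).
- intros k; destruct (HN (N + k)%nat) as (Hq & Ht & Hsmall); [lia |].
  rewrite q_in_range_true by assumption.
  destruct (inner_sum_le f B c delta HB Hc Hf0 Hfmono Hfsub (N + k) (Psi (INR (N + k)))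
              Hq (HPsi_pos _ Ht) Hsmall) as [Hnonneg Hle].
  change (norm ?s) with (Rabs s); rewrite Rabs_pos_eq; assumption.
- exact (proj1 (ex_series_incr_n _ N) (ex_series_scal (c * B / (B - c)) _ Hconv)).
Qed.
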